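(* Let $L=\bigoplus_{i=0}^N L_i$ be a Jordan splitting with $N\ge2$, let $L'$ be the associated lattice with decomposition $L'=\bigoplus_{i=0}^{N-1}L'_i$, and let $M\in\{L,L'\}$ with its given decomposition $M=\bigoplus_i M_i$. Let $0\le i\le j\le N$ if $M=L$ and $0\le i\le j\le N-1$ if $M=L'$. Then for all $g\in G_M$ and $x\in M_j$ we have $g(x)^M_i\in\mathfrak{p}_E^{j-i}M_i$.
   Context: $F$ is a non-archimedean local field with residue characteristic $p$, ring of integers $\mathcal{O}_F$, uniformiser $\varpi_F$. Fix $\epsilon\in\{\pm1\}$ and $(E,\sigma)$ one of: $E=F$, $\sigma=\mathrm{id}$; $E$ a quadratic field extension of $F$ with $\sigma$ the nontrivial automorphism; $E=F\oplus F$ with $\sigma(x,y)=(y,x)$; $E$ the quaternion division algebra over $F$ with its standard involution. Assume $p\ne2$ if $E$ is a ramified quadratic extension, or if $E=F$ and $\epsilon=1$. $\mathcal{O}_E$ is the maximal $\mathcal{O}_F$-order; $\varpi_E$ is a uniformiser of $\mathcal{O}_E$ if $E/F$ is ramified or $E$ is quaternion, and $\varpi_E=\varpi_F$ otherwise; $\mathfrak{p}_E=\varpi_E\mathcal{O}_E$. $L$ is a finite-rank $\mathcal{O}_E$-lattice with a $(\sigma,\epsilon)$-Hermitian form $\langle\ ,\ \rangle:L\times L\to\mathcal{O}_E$, nondegenerate on $V=L\otimes_{\mathcal{O}_F}F$; $L^\vee=\{x\in V:\langle x,L\rangle\subseteq\mathcal{O}_E\}$. A Jordan splitting is an orthogonal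 decomposition $L=\bigoplus_{i=0}^N L_i$ with $L_i^\vee=\mathfrak{p}_E^{-i}L_i$. For $N\ge2$, $L'=\bigoplus_{i=0}^{N-1}L'_i$ where $L'_i=L_i$ for $i\ne N-2$ and $L'_{N-2}=L_{N-2}\oplus\mathfrak{p}_E^{-1}L_N$. For $x\in V$ and a decomposition $M=\bigoplus_i M_i$, $x^M_i\in M_i\otimes F$ denotes the components with $x=\sum_i x^M_i$. $G_V$ is the isometry group of $V$ and $G_M\subseteq G_V$ the stabiliser of $M$. *)

From HB Require Import structures.
From mathcomp Require Import all_boot all_order all_algebra all_field.
Set Implicit Arguments. Unset Strict Implicit. Unset Printing Implicit Defensive.
Import Order.TTheory GRing.Theory Num.Theory.
Local Open Scope ring_scope.

(* v : F -> int is only meaningful on nonzero elements; v 0 is junk.  *)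
Section LocalField.
Variable F : fieldType.
Variable v : F -> int.

(* "x = 0 or v x >= n", i.e. x lies in p_F^n *)
Definition vge (n : int) (x : F) : Prop := x = 0 \/ n <= v x.

Definition discrete_valuation : Prop :=
  [/\ (forall x y, x != 0 -> y != 0 -> v (x * y) = v x + v y),
      (forall x y, x != 0 -> y != 0 -> x + y != 0 -> Num.min (v x) (v y) <= v (x + y))
    & (forall n : int, exists x, x != 0 /\ v x = n)].

Definition OF (x : F) : Prop := vge 0 x.
Definition pF (x : F) : Prop := vge 1 x.

Definition complete_wrt_v : Prop :=
  forall u : nat -> F,
    (forall n : int, exists N, forall a b, (N <= a)%N -> (N <= b)%N -> vge n (u a - u b)) ->
    exists l, forall n : int, exists N, forall a, (N <= a)%N -> vge n (u a - l).

Definition finite_residue_field : Prop :=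
  exists s : seq F, (forall r, r \in s -> OF r) /\
    forall x, OF x -> exists2 r, r \in s & pF (x - r).

Definition nonarch_local_field : Prop :=
  [/\ discrete_valuation, complete_wrt_v & finite_residue_field].

Definition uniformiserF (w : F) : Prop := w != 0 /\ v w = 1.

Definition residue_char (p : nat) : Prop := prime p /\ pF (p%:R).
End LocalField.

Section Algebra.
Variable F : fieldType.
Variable E : falgType F.

Definition anti_involution (s : E -> E) : Prop :=
  [/\ (forall x y, s (x + y) = s x + s y),
      (forall x y, s (x * y) = s y * s x),
      (forall (c : F) x, s (c *: x) = c *: s x),
      s 1 = 1
    & (forall x, s (s x) = x)].

Definition ring_automorphism_over_F (s : E -> E) : Prop :=
  [/\ (forall x y, s (x + y) = s x + s y),
      (forall x y, s (x * y) = s x * s y),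
      (forall (c : F) x, s (c *: x) = c *: s x),
      s 1 = 1
    & bijective s].

Definition is_division_ring : Prop := forall x : E, x != 0 -> x \is a GRing.unit.
Definition is_commutative : Prop := forall x y : E, x * y = y * x.
Definition is_central : Prop :=
  forall x : E, (forall y : E, x * y = y * x) -> exists c : F, x = c%:A.

Definition standard_involution (s : E -> E) : Prop :=
  anti_involution s /\ forall x, exists c : F, x * s x = c%:A.

Definition split_with_swap (s : E -> E) : Prop :=
  exists phi : E -> F * F,
    [/\ bijective phi,
        (forall x y, phi (x + y) = phi x + phi y),
        (forall x y, phi (x * y) = phi x * phi y),
        (forall c : F, phi c%:A = (c, c))
      & (forall x, phi (s x) = ((phi x).2, (phi x).1))].

Inductive Ecase := CaseF | CaseQuadField | CaseSplit | CaseQuaternion.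

Definition admissible (c : Ecase) (s : E -> E) : Prop :=
  match c with
  | CaseF => \dim {:E} = 1%N /\ (forall x, s x = x)
  | CaseQuadField => [/\ \dim {:E} = 2%N, is_commutative, is_division_ring,
                         ring_automorphism_over_F s & exists x, s x != x]
  | CaseSplit => \dim {:E} = 2%N /\ split_with_swap s
  | CaseQuaternion => [/\ \dim {:E} = 4%N, is_division_ring, is_central
                         & standard_involution s]
  end.

Variable OFp : F -> Prop.

Definition OF_span (s : seq E) (x : E) : Prop :=
  exists a : 'I_(size s) -> F, (forall k, OFp (a k)) /\
    x = \sum_(k < size s) a k *: s`_k.

Definition is_order (Lam : E -> Prop) : Prop :=
  [/\ Lam 1,
      (forall x y, Lam x -> Lam y -> Lam (x - y) /\ Lam (x * y)),
      (forall (c : F) x, OFp c -> Lam x -> Lam (c *: x)),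
      (exists s : seq E, forall x, Lam x <-> OF_span s x)
    & (forall x : E, exists c : F, c != 0 /\ Lam (c *: x))].

Definition is_maximal_order (Lam : E -> Prop) : Prop :=
  is_order Lam /\
  forall Lam', is_order Lam' -> (forall x, Lam x -> Lam' x) -> forall x, Lam' x -> Lam x.

Variable OE : E -> Prop.

Definition OE_unit (x : E) : Prop := OE x /\ x \is a GRing.unit /\ OE x^-1.
Definition uniformiserE (w : E) : Prop :=
  OE w /\ forall x, (OE x /\ ~ OE_unit x) <-> (exists b, OE b /\ x = w * b).

Definition ramified (wF : F) : Prop := ~ uniformiserE wF%:A.

Definition pE_pow (wE : E) (k : int) (a : E) : Prop :=
  exists b, OE b /\ a = wE ^ k * b.
End Algebra.

Section Lattices.
Variable F : fieldType.
Variable E : falgType F.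
Variable V : lmodType E.
Variable OE : E -> Prop.

Definition ideal_mul (I : E -> Prop) (M : V -> Prop) (x : V) : Prop :=
  exists n (a : 'I_n -> E) (m : 'I_n -> V),
    [/\ forall l, I (a l), forall l, M (m l) & x = \sum_(l < n) a l *: m l].

Definition Fspan (M : V -> Prop) (x : V) : Prop :=
  exists n (c : 'I_n -> F) (m : 'I_n -> V),
    (forall l, M (m l)) /\ x = \sum_(l < n) (c l)%:A *: m l.

Definition OE_submodule (M : V -> Prop) : Prop :=
  [/\ M 0, (forall x y, M x -> M y -> M (x + y))
    & (forall a x, OE a -> M x -> M (a *: x))].

Definition fin_gen (M : V -> Prop) : Prop :=
  exists s : seq V, forall x, M x <->
    exists a : 'I_(size s) -> E, (forall k, OE (a k)) /\ x = \sum_(k < size s) a k *: s`_k.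

Definition full_lattice (M : V -> Prop) : Prop :=
  [/\ OE_submodule M, fin_gen M & forall x, Fspan M x].

Definition sigma_eps_hermitian (s : E -> E) (eps : F) (h : V -> V -> E) : Prop :=
  [/\ (forall x y z, h (x + y) z = h x z + h y z),
      (forall a x y, h (a *: x) y = a * h x y)
    & (forall x y, h x y = eps%:A * s (h y x))].

Definition nondegenerate_form (h : V -> V -> E) : Prop :=
  forall x, (forall y, h x y = 0) -> x = 0.

Definition dual_lattice (h : V -> V -> E) (M : V -> Prop) (x : V) : Prop :=
  Fspan M x /\ forall m, M m -> OE (h x m).

Definition dsum (Ms : nat -> V -> Prop) (K : nat) (x : V) : Prop :=
  exists y : nat -> V, (forall k, (k <= K)%N -> Ms k (y k)) /\ x = \sum_(k < K.+1) y k.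

Definition jordan_splitting (wE : E) (h : V -> V -> E) (L : V -> Prop)
    (Ls : nat -> V -> Prop) (N : nat) : Prop :=
  [/\ (forall i, (i <= N)%N -> OE_submodule (Ls i)),
      (forall x, L x <-> dsum Ls N x),
      (forall y : nat -> V, (forall k, (k <= N)%N -> Ls k (y k)) ->
          \sum_(k < N.+1) y k = 0 -> forall k, (k <= N)%N -> y k = 0),
      (forall i j x y, (i <= N)%N -> (j <= N)%N -> i != j -> Ls i x -> Ls j y -> h x y = 0)
    & (forall i, (i <= N)%N -> forall x,
          dual_lattice h (Ls i) x <-> ideal_mul (pE_pow OE wE (- (i%:Z))) (Ls i) x)].

Definition Lprime_parts (wE : E) (Ls : nat -> V -> Prop) (N : nat) (i : nat) : V -> Prop :=
  if i == (N - 2)%N then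
    fun x => exists a b, [/\ Ls (N - 2)%N a,
                             ideal_mul (pE_pow OE wE (-1)) (Ls N) b & x = a + b]
  else Ls i.

Definition is_isometry (h : V -> V -> E) (g : V -> V) : Prop :=
  [/\ (forall x y, g (x + y) = g x + g y),
      (forall a x, g (a *: x) = a *: g x),
      bijective g
    & (forall x y, h (g x) (g y) = h x y)].

Definition stabilises (g : V -> V) (M : V -> Prop) : Prop :=
  forall y, M y <-> exists x, M x /\ y = g x.
End Lattices.

(* Write x = w^j u with u in the dual M_j^vee.  As g is an isometry preserving
   M, g u pairs integrally with M, so each component (g u)_i pairs integrally
   with M_i, i.e. lies in M_i^vee = p_E^-i M_i; hence g(x)_i = w^j (g u)_i lies
   in p_E^(j-i) M_i.  This uses only that the components are orthogonal, that
   M_k^vee = p_E^-k M_k, and that the form is nondegenerate.  For L' the one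
   new component L'_{N-2} = L_{N-2} + p_E^-1 L_N has dual p_E^-(N-2) L'_{N-2}
   because p_E^-1 passes through the form as h(x, w^-1 y) = h(x, y) sigma(w)^-1
   with w O_E = O_E sigma(w).  When w lies in F this is clear; in the ramified
   and quaternion cases it holds because sigma preserves O_E (the trace
   x + sigma x of an integral x is integral) and hence its non-units w O_E. *)

From HB Require Import structures.
From mathcomp Require Import all_boot all_order all_algebra all_field.
From mathcomp Require Import zify.
From Stdlib Require Import Classical.
Import Order.TTheory GRing.Theory Num.Theory.
Local Open Scope ring_scope.

Set Implicit Arguments. Unset Strict Implicit. Unset Printing Implicit Defensive.

Section Valuation.
Variables (F : fieldType) (v : F -> int).
Hypothesis vM : forall x y, x != 0 -> y != 0 -> v (x * y) = v x + v y.
Hypothesis vD : forall x y, x != 0 -> y != 0 -> x + y != 0 -> Num.min (v x) (v y) <= v (x + y).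

Lemma val1 : v 1 = 0.
Proof.
have := vM (oner_neq0 F) (oner_neq0 F); rewrite mulr1 => /eqP.
by rewrite addrC -subr_eq subrr => /eqP.
Qed.

Lemma valX c k : c != 0 -> v (c ^+ k) = k%:Z * v c.
Proof.
move=> c0; elim: k => [|k IH]; first by rewrite expr0 val1 mul0r.
rewrite exprS vM ?expf_neq0 // IH; lia.
Qed.

Lemma vge_le n m x : n <= m -> vge v m x -> vge v n x.
Proof. by move=> nm [->|H]; [left | right; apply: le_trans H]. Qed.

Lemma vge_add n x y : vge v n x -> vge v n y -> vge v n (x + y).
Proof.
move=> [->|Hx]; first by rewrite add0r.
move=> [->|Hy]; first by rewrite addr0; right.
have [->|s0] := eqVneq (x + y) 0; first by left.
have [x0|x0] := eqVneq x 0; first by rewrite x0 add0r; right.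
have [y0|y0] := eqVneq y 0; first by rewrite y0 addr0; right.
by right; apply: le_trans (vD x0 y0 s0); rewrite le_min Hx Hy.
Qed.

Lemma vge_mul n m x y : vge v n x -> vge v m y -> vge v (n + m) (x * y).
Proof.
have [->|x0] := eqVneq x 0; first by rewrite mul0r; left.
have [->|y0] := eqVneq y 0; first by rewrite mulr0; left.
move=> [/eqP|Hx]; first by rewrite (negbTE x0).
move=> [/eqP|Hy]; first by rewrite (negbTE y0).
by right; rewrite vM // lerD.
Qed.

Lemma vge_sum n (I : finType) (f : I -> F) :
  (forall i, vge v n (f i)) -> vge v n (\sum_i f i).
Proof. by move=> H; elim/big_rec: _ => [|i x _]; [left | apply: vge_add]. Qed.

Lemma vge_natmul n x k : vge v n x -> vge v n (x *+ k).
Proof. by move=> H; elim: k => [|k IH]; [left; rewrite mulr0n | rewrite mulrS; apply: vge_add]. Qed.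

Lemma vge_finite_bound (I : finType) (f : I -> F) : exists C, forall i, vge v C (f i).
Proof.
suff [C HC] : exists C, forall i, i \in enum I -> vge v C (f i).
  by exists C => i; apply: HC; rewrite mem_enum.
elim: (enum I) => [|a s [C HC]]; first by exists 0.
exists (Num.min C (v (f a))) => i; rewrite in_cons => /orP [/eqP ->|/HC]; last first.
  by apply: vge_le; rewrite ge_min lexx.
by have [->|_] := eqVneq (f a) 0; [left | right; rewrite ge_min lexx orbT].
Qed.

Variable E : falgType F.
Let e := vbasis (fullv : {vspace E}).

Definition coord_vge (C : int) (x : E) : Prop := forall i, vge v C (coord e i x).

Lemma coord_vge_sum C (I : finType) (f : I -> E) :
  (forall i, coord_vge C (f i)) -> coord_vge C (\sum_i f i).
Proof. by move=> H p; rewrite linear_sum; apply: vge_sum => i; apply: H. Qed.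

Lemma coord_vge_OF_span (s : seq E) : exists C, forall x, OF_span (OF v) s x -> coord_vge C x.
Proof.
have [C HC] := vge_finite_bound (fun kp : 'I_(size s) * 'I_(\dim {:E}) => coord e kp.2 s`_kp.1).
exists C => x [a [Ha ->]] p; rewrite linear_sum; apply: vge_sum => k.
by rewrite linearZ -[C]add0r; apply: vge_mul; [apply: Ha | apply: (HC (k, p))].
Qed.

Lemma coord_vge_mul : exists Cm, forall x y Cx Cy,
  coord_vge Cx x -> coord_vge Cy y -> coord_vge (Cx + Cy + Cm) (x * y).
Proof.
pose d := \dim {:E}.
have [Cm HC] := vge_finite_bound
  (fun ijp : 'I_d * 'I_d * 'I_d => coord e ijp.2 (e`_ijp.1.1 * e`_ijp.1.2)).
exists Cm => x y Cx Cy Hx Hy p.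
rewrite (coord_vbasis (memvf x)) (coord_vbasis (memvf y)) mulr_suml linear_sum.
apply: vge_sum => i; rewrite mulr_sumr linear_sum; apply: vge_sum => j.
rewrite -scalerAl -scalerAr !linearZ /= -addrA.
by apply: vge_mul => //; apply: vge_mul => //; apply: (HC (i, j, p)).
Qed.

Lemma coord_vge_additive (f : E -> E) : (forall x y, f (x + y) = f x + f y) ->
  (forall c x, f (c *: x) = c *: f x) ->
  exists Cf, forall x Cx, coord_vge Cx x -> coord_vge (Cx + Cf) (f x).
Proof.
move=> fD fZ.
have f0 : f 0 = 0 by apply: (addrI (f 0)); rewrite -fD !addr0.
have [Cf HC] := vge_finite_bound
  (fun ip : 'I_(\dim {:E}) * 'I_(\dim {:E}) => coord e ip.2 (f e`_ip.1)).
exists Cf => x Cx Hx p.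
have -> : f x = \sum_i coord e i x *: f e`_i.
  rewrite {1}(coord_vbasis (memvf x)).
  by elim/big_rec2: _ => [|i a b _ <-]; rewrite ?fD ?fZ.
rewrite linear_sum; apply: vge_sum => i; rewrite linearZ.
by apply: vge_mul => //; apply: (HC (i, p)).
Qed.

Lemma val_ge0_of_bounded_powers (c : F) C :
  c != 0 -> (forall k, coord_vge C (c ^+ k)%:A) -> 0 <= v c.
Proof.
move=> c0 H.
have /existsP [i ci0] : [exists i, coord e i 1 != 0].
  apply: contraT; rewrite negb_exists => /forallP /= all0.
  have : (1 : E) = 0.
    by rewrite (coord_vbasis (memvf 1)) big1 // => i _; rewrite (eqP (negPn (all0 i))) scale0r.
  by move/eqP; rewrite oner_eq0.
rewrite leNgt; apply/negP => vc.
(* for this k, v (c^k * coord 1) <= v (coord 1) - k < C *)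
have := H (absz (v (coord e i 1) - C)).+1 i; rewrite linearZ => [[]].
  by move/eqP; rewrite mulf_eq0 expf_eq0 (negbTE c0) (negbTE ci0) andbF.
rewrite vM ?expf_neq0 ?valX //.
move: vc; move: (v c) (v (coord e i 1)) => a b; nia.
Qed.

End Valuation.

Lemma algV (F : fieldType) (E : falgType F) (c : F) :
  c != 0 -> (c%:A : E) \is a GRing.unit /\ (c%:A : E)^-1 = c^-1%:A.
Proof. by move=> c0; rewrite scaler_unit ?invrZ ?unitfE ?invr1 ?unitr1. Qed.

Lemma algX (F : fieldType) (E : falgType F) (c : F) k : (c ^+ k)%:A = (c%:A : E) ^+ k.
Proof. by rewrite exprZn expr1n. Qed.

(* rho plays the role of sigma(w)^-1 (it is w^-1 when w lies in F): then
   h x (w^-1 y) = h x y * rho, and the last condition says w O_E = O_E rho^-1. *)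
Definition sigma_twisted (F : fieldType) (E : falgType F) (OE : E -> Prop)
    (sigma : E -> E) (w rho : E) : Prop :=
  [/\ OE w, w \is a GRing.unit, (forall z, sigma (w^-1 * z) = sigma z * rho)
    & forall c, OE (w * c * rho) <-> OE c].

Section Order.
Variables (F : fieldType) (v : F -> int) (E : falgType F) (OE : E -> Prop).
Hypothesis vM : forall x y, x != 0 -> y != 0 -> v (x * y) = v x + v y.
Hypothesis vD : forall x y, x != 0 -> y != 0 -> x + y != 0 -> Num.min (v x) (v y) <= v (x + y).
Hypothesis OE_order : is_order (OF v) OE.

Lemma OE1 : OE 1. Proof. by case: OE_order. Qed.

Lemma OEB x y : OE x -> OE y -> OE (x - y).
Proof. by case: OE_order => _ H _ _ _ Ox Oy; case: (H x y Ox Oy). Qed.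

Lemma OEM x y : OE x -> OE y -> OE (x * y).
Proof. by case: OE_order => _ H _ _ _ Ox Oy; case: (H x y Ox Oy). Qed.

Lemma OE0 : OE 0.
Proof. by rewrite -(subrr 1); apply: OEB; apply: OE1. Qed.

Lemma OED x y : OE x -> OE y -> OE (x + y).
Proof.
move=> Ox Oy; have -> : x + y = x - (0 - y) by rewrite sub0r opprK.
by apply: OEB => //; apply: OEB OE0 Oy.
Qed.

Lemma OEZ c x : OF v c -> OE x -> OE (c *: x).
Proof. by case: OE_order => _ _ H _ _; apply: H. Qed.

Lemma OEX x k : OE x -> OE (x ^+ k).
Proof.
by move=> Ox; elim: k => [|k IH]; [rewrite expr0; apply: OE1 | rewrite exprS; apply: OEM].
Qed.

Lemma OE_coord_vge : exists C, forall x, OE x -> coord_vge v C x.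
Proof.
case: OE_order => _ _ _ [s Hs] _.
have [C HC] := coord_vge_OF_span vM vD s.
by exists C => x /Hs; apply: HC.
Qed.

Lemma OE_scalar_val_ge0 c : c != 0 -> OE c%:A -> 0 <= v c.
Proof.
move=> c0 Oc; have [C HC] := OE_coord_vge.
apply: (val_ge0_of_bounded_powers vM (E := E) (C := C)) => // k.
by apply: HC; rewrite algX; apply: OEX.
Qed.

Lemma scalar_sigma_twisted (sigma : E -> E) (wF : F) :
  (forall (c : F) x, sigma (c *: x) = c *: sigma x) -> wF != 0 -> OF v wF ->
  sigma_twisted OE sigma wF%:A wF^-1%:A.
Proof.
move=> sigmaZ wF0 OwF; have [U wFV] := algV E wF0.
split => [||z|c]; rewrite ?wFV //; first exact: OEZ OE1.
  by rewrite mulr_algl sigmaZ mulr_algr.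
by rewrite mulr_algl mulr_algr scalerA mulVf ?scale1r.
Qed.

Section Involution.
Variable sigma : E -> E.
Hypothesis sigmaD : forall x y, sigma (x + y) = sigma x + sigma y.
Hypothesis sigmaZ : forall (c : F) x, sigma (c *: x) = c *: sigma x.
Hypothesis sigmaM : forall x y, sigma (x * y) = sigma y * sigma x.
Hypothesis sigma1 : sigma 1 = 1.
Hypothesis sigmaK : forall x, sigma (sigma x) = x.
Hypothesis trace_scalar : forall x, exists t : F, x + sigma x = t%:A.

Lemma sigmaX x k : sigma (x ^+ k) = sigma x ^+ k.
Proof. by elim: k => [|k IH]; rewrite ?expr0 // exprSr sigmaM IH -exprS. Qed.

(* The trace t = x + sigma x is integral: the powers t^k are sums of products
   x^i sigma(x)^(k-i), whose coordinates are uniformly bounded. *)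
Lemma sigma_OE x : OE x -> OE (sigma x).
Proof.
move=> Ox; have [t Ht] := trace_scalar x.
have -> : sigma x = t%:A - x by rewrite -Ht addrC addKr.
apply: OEB => //; apply: OEZ OE1.
have [->|t0] := eqVneq t 0; [by left | right].
have [C0 HC0] := OE_coord_vge.
have [Cs HCs] := coord_vge_additive vM vD sigmaD sigmaZ.
have [Cm HCm] := coord_vge_mul vM vD E.
apply: (val_ge0_of_bounded_powers vM (E := E) (C := C0 + (C0 + Cs) + Cm)) => // k.
have cx : GRing.comm x (sigma x).
  by rewrite /GRing.comm -[sigma x](addKr x) Ht mulrDr mulrDl mulr_algl mulr_algr mulrN mulNr.
rewrite algX -Ht exprDn_comm //.
apply: (coord_vge_sum vD) => i p; rewrite linearMn; apply: (vge_natmul vD).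
apply: HCm; first by apply/HC0/OEX.
by rewrite -sigmaX; apply/HCs/HC0/OEX.
Qed.

Lemma sigma_unit x : x \is a GRing.unit ->
  sigma x \is a GRing.unit /\ (sigma x)^-1 = sigma x^-1.
Proof.
move=> U.
have sxV : sigma x * sigma x^-1 = 1 by rewrite -sigmaM mulVr.
have sVx : sigma x^-1 * sigma x = 1 by rewrite -sigmaM mulrV.
have U' : sigma x \is a GRing.unit by apply/unitrP; exists (sigma x^-1).
by split => //; apply: (mulrI U'); rewrite mulrV.
Qed.

Lemma sigma_OE_unit x : OE_unit OE x -> OE_unit OE (sigma x).
Proof.
move=> [Ox [U Oi]]; have [U' sxV] := sigma_unit U.
by split; [exact: sigma_OE | split => //; rewrite sxV; exact: sigma_OE].
Qed.

Lemma sigma_OE_nonunit x :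
  OE x /\ ~ OE_unit OE x -> OE (sigma x) /\ ~ OE_unit OE (sigma x).
Proof. by move=> [Ox Nx]; split; [exact: sigma_OE | move/sigma_OE_unit; rewrite sigmaK]. Qed.

Variables (w : E) (wF : F).
Hypothesis wF_unif : uniformiserF v wF.
Hypothesis E_division : is_division_ring E.
Hypothesis w_unif : uniformiserE OE w.

Lemma uniformiser_neq0 : w != 0.
Proof.
apply/negP => /eqP w0; have [wF0 vwF] := wF_unif.
have OwF : OE wF%:A by apply: OEZ OE1; right; rewrite vwF.
have [UwF|NUwF] := classic (OE_unit OE wF%:A); last first.
  have [b [_]] := (w_unif.2 _).1 (conj OwF NUwF).
  by rewrite w0 mul0r => /eqP; rewrite scaler_eq0 oner_eq0 orbF (negbTE wF0).
have [_ [_]] := UwF; rewrite (algV E wF0).2 => /(OE_scalar_val_ge0 (invr_neq0 wF0)).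
by have := vM wF0 (invr_neq0 wF0); rewrite mulfV // (val1 vM) vwF; lia.
Qed.

Lemma uniformiser_unit : w \is a GRing.unit.
Proof. exact: E_division uniformiser_neq0. Qed.

(* Both w a and sigma(a) sigma(w) range over the non-units of O_E, which are
   stable under sigma. *)
Lemma w_OE_sub_OE_sigma_w a : OE a -> exists b, OE b /\ w * a = b * sigma w.
Proof.
move=> Oa; have /(w_unif.2 _) NUwa : exists b, OE b /\ w * a = w * b by exists a.
have [c [Oc Ec]] := (w_unif.2 _).1 (sigma_OE_nonunit NUwa).
by exists (sigma c); split; [exact: sigma_OE | rewrite -sigmaM -Ec sigmaK].
Qed.

Lemma OE_sigma_w_sub_w_OE b : OE b -> exists a, OE a /\ b * sigma w = w * a.
Proof.
move=> Ob; have /(w_unif.2 _) NUwb : exists a, OE a /\ w * sigma b = w * a.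
  by exists (sigma b); split; [exact: sigma_OE|].
have [c [Oc Ec]] := (w_unif.2 _).1 (sigma_OE_nonunit NUwb).
by exists c; split => //; rewrite -Ec sigmaM sigmaK.
Qed.

Lemma uniformiser_sigma_twisted : sigma_twisted OE sigma w (sigma w^-1).
Proof.
have Uw := uniformiser_unit; have [Usw swV] := sigma_unit Uw.
split => //; first by case: w_unif.
move=> c; rewrite -swV; split => Oc.
  have [a [Oa Ea]] := OE_sigma_w_sub_w_OE Oc.
  by move: Ea; rewrite divrK // => /(mulrI Uw) ->.
by have [b [Ob ->]] := w_OE_sub_OE_sigma_w Oc; rewrite mulrK.
Qed.

End Involution.

End Order.

Section QuadraticExtension.
Variables (F : fieldType) (E : falgType F) (sigma : E -> E).
Hypothesis E_dim2 : \dim {:E} = 2%N.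
Hypothesis E_comm : is_commutative E.
Hypothesis E_division : is_division_ring E.
Hypothesis sigma_aut : ring_automorphism_over_F sigma.
Hypothesis sigma_nontrivial : exists x, sigma x != x.

Let sigmaD : forall x y, sigma (x + y) = sigma x + sigma y.
Proof. by case: sigma_aut. Qed.

Let sigma_alg (c : F) : sigma c%:A = c%:A.
Proof. by case: sigma_aut => _ _ sZ s1 _; rewrite sZ s1. Qed.

Let sigmaN x : sigma (- x) = - sigma x.
Proof.
apply: (addrI (sigma x)); rewrite -sigmaD !subrr.
by rewrite -(scale0r (1%R : E)) sigma_alg.
Qed.

Lemma quadratic_basis (a : E) : a \notin <[(1%R : E)]>%VS ->
  forall z : E, exists r s : F, z = r *: a + s%:A.
Proof.
move=> a_nF z.
have fr : free [:: a; (1%R : E)] by rewrite free_cons span_seq1 a_nF seq1_free oner_neq0.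
have : z \in <<[:: a; (1%R : E)]>>%VS.
  suff -> : (<<[:: a; (1%R : E)]>> = fullv)%VS by rewrite memvf.
  by apply/eqP; rewrite eqEdim subvf /= (eqnP fr) E_dim2.
rewrite span_cons span_seq1 => /memv_addP [_ /vlineP [r ->] [_ /vlineP [s ->] ->]].
by exists r, s.
Qed.

(* With sigma a != a and a^2 = q a + p, the conjugate sigma a is the other
   root of X^2 - q X - p, so a + sigma a = q. *)
Lemma quadratic_sigma_trace :
  (forall x, sigma (sigma x) = x) /\ (forall x, exists t : F, x + sigma x = t%:A).
Proof.
have [_ sigmaM sigmaZ _ _] := sigma_aut.
have [a sa_a] := sigma_nontrivial.
have a_nF : a \notin <[(1%R : E)]>%VS.
  by apply: contra sa_a => /vlineP [k ->]; rewrite sigma_alg.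
have dec := quadratic_basis a_nF.
have [q [p a2]] := dec (a * a).
set b := sigma a.
have b2 : b * b = q *: b + p%:A by rewrite /b -sigmaM a2 sigmaD sigmaZ sigma_alg.
have ba : b + a = q%:A.
  have /E_division Uba : b - a != 0 by rewrite subr_eq0.
  apply: (mulrI Uba); rewrite mulrDr !mulrBl (E_comm a b) b2 a2 !mulr_algr.
  by rewrite addrA subrK opprD addrACA subrr addr0.
have sb : sigma b = a.
  by rewrite -[b](addrK a) ba sigmaD sigmaN sigma_alg -ba addrAC subrr add0r.
split => z; have [r [s ->]] := dec z.
  by rewrite sigmaD sigmaZ sigma_alg sigmaD sigmaZ sb sigma_alg.
exists (r * q + s + s).
by rewrite sigmaD sigmaZ sigma_alg addrACA -scalerDr -/b [a + b]addrC ba scalerA !scalerDl addrA.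
Qed.

End QuadraticExtension.

Section AdmissibleInvolutions.
Variables (F : fieldType) (E : falgType F).

Lemma standard_involution_trace (sigma : E -> E) : standard_involution sigma ->
  forall x, exists t : F, x + sigma x = t%:A.
Proof.
move=> [[sigmaD _ _ sigma1 _] norm] x.
have [n0 En0] := norm x; have [n1 En1] := norm (x + 1).
exists (n1 - n0 - 1); apply/eqP.
rewrite eq_sym !scalerBl scale1r !subr_eq -En1 sigmaD sigma1 mulrDl !mulrDr En0 !mulr1 mul1r.
by rewrite [X in _ == X]addrC !addrA.
Qed.

Lemma admissible_sigma_linear (c : Ecase) (sigma : E -> E) : admissible c sigma ->
  (forall x y, sigma (x + y) = sigma x + sigma y) /\
  (forall (a : F) x, sigma (a *: x) = a *: sigma x).
Proof.
case: c => /=.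
- by move=> [_ H]; split => *; rewrite !H.
- by move=> [_ _ _ [H1 _ H3 _ _] _].
- move=> [_ [phi [/bij_inj inj phiD phiM phi_alg phi_swap]]]; split.
    by move=> x y; apply: inj; rewrite phiD !phi_swap phiD.
  move=> a x; apply: inj.
  by rewrite -mulr_algl phi_swap phiM phi_alg -mulr_algl phiM phi_alg phi_swap.
- by move=> [_ _ _ [[H1 _ H3 _ _] _]].
Qed.

Lemma ramified_admissible (OE : E -> Prop) (wF : F) (c : Ecase) (sigma : E -> E) :
  (c = CaseQuadField /\ ramified OE wF) \/ c = CaseQuaternion -> admissible c sigma ->
  [/\ is_division_ring E, (forall x y, sigma (x * y) = sigma y * sigma x), sigma 1 = 1,
      (forall x, sigma (sigma x) = x) & (forall x, exists t : F, x + sigma x = t%:A)].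
Proof.
move=> [[-> _]|->] /=.
  move=> [E_dim2 E_comm E_division sigma_aut sigma_nontrivial].
  have [sigmaK trace] := quadratic_sigma_trace E_dim2 E_comm E_division sigma_aut sigma_nontrivial.
  have [_ sigmaM _ sigma1 _] := sigma_aut.
  by split => // x y; rewrite sigmaM E_comm.
move=> [_ E_division _ std]; have trace := standard_involution_trace std.
by have [[_ sigmaM _ sigma1 sigmaK] _] := std.
Qed.

End AdmissibleInvolutions.

Section FSpan.
Variables (F : fieldType) (E : falgType F) (V : lmodType E).
Implicit Types (M : V -> Prop) (x : V).

Lemma Fspan_id M x : M x -> Fspan M x.
Proof. by move=> Mx; exists 1%N, (fun _ => 1), (fun _ => x); rewrite big_ord1 !scale1r. Qed.

Lemma Fspan0 M : Fspan M 0.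
Proof. by exists 0%N, (fun _ => 0), (fun _ => 0); rewrite big_ord0; split=> // -[]. Qed.

Lemma FspanD M x y : Fspan M x -> Fspan M y -> Fspan M (x + y).
Proof.
move=> [n1 [c1 [m1 [H1 ->]]]] [n2 [c2 [m2 [H2 ->]]]].
exists (n1 + n2)%N, (fun i => match split i with inl a => c1 a | inr b => c2 b end),
  (fun i => match split i with inl a => m1 a | inr b => m2 b end).
split; first by move=> i; case: (split i).
rewrite big_split_ord /=; congr (_ + _); apply: eq_bigr => i _.
  by rewrite (unsplitK (inl _ i)).
by rewrite (unsplitK (inr _ i)).
Qed.

Lemma Fspan_sub M1 M2 x : (forall m, M1 m -> M2 m) -> Fspan M1 x -> Fspan M2 x.
Proof. by move=> H [n [c [m [Hm ->]]]]; exists n, c, m; split => // l; apply: H. Qed.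

Lemma FspanZ M (a : E) x :
  (forall m, M m -> Fspan M (a *: m)) -> Fspan M x -> Fspan M (a *: x).
Proof.
move=> Ha [n [c [m [Hm ->]]]]; rewrite scaler_sumr.
elim/big_rec: _ => [|l z _ Hz]; first exact: Fspan0.
apply: FspanD => //; have [n' [c' [m' [Hm' Eam]]]] := Ha _ (Hm l).
exists n', (fun k => c l * c' k), m'; split => //.
rewrite scalerA mulr_algr -mulr_algl -scalerA Eam scaler_sumr.
by apply: eq_bigr => k _; rewrite scalerA mulr_algl scalerA.
Qed.

End FSpan.

Section HermitianForm.
Variables (F : fieldType) (E : falgType F) (V : lmodType E).
Variables (h : V -> V -> E) (sigma : E -> E) (eps : F).
Hypothesis h_herm : sigma_eps_hermitian sigma eps h.
Hypothesis sigmaD : forall x y, sigma (x + y) = sigma x + sigma y.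

Lemma hermDl x y z : h (x + y) z = h x z + h y z. Proof. by case: h_herm. Qed.
Lemma hermZl a x y : h (a *: x) y = a * h x y. Proof. by case: h_herm. Qed.
Lemma herm_sym x y : h x y = eps%:A * sigma (h y x). Proof. by case: h_herm. Qed.

Lemma sigma0 : sigma 0 = 0.
Proof. by apply: (addrI (sigma 0)); rewrite -sigmaD !addr0. Qed.

Lemma herm0l y : h 0 y = 0.
Proof. by rewrite -(scale0r 0) hermZl mul0r. Qed.

Lemma hermBl x z y : h (x - z) y = h x y - h z y.
Proof. by rewrite hermDl -scaleN1r hermZl mulN1r. Qed.

Lemma herm_suml n (f : 'I_n -> V) y : h (\sum_(i < n) f i) y = \sum_(i < n) h (f i) y.
Proof. by elim/big_rec2: _ => [|i a b _ <-]; rewrite ?herm0l ?hermDl. Qed.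

Lemma herm0r x : h x 0 = 0.
Proof. by rewrite herm_sym herm0l sigma0 mulr0. Qed.

Lemma hermDr x y z : h x (y + z) = h x y + h x z.
Proof. by rewrite herm_sym hermDl sigmaD mulrDr -!herm_sym. Qed.

Lemma herm_sumr n (f : 'I_n -> V) y : h y (\sum_(i < n) f i) = \sum_(i < n) h y (f i).
Proof. by elim/big_rec2: _ => [|i a b _ <-]; rewrite ?herm0r ?hermDr. Qed.

Lemma herm_eq0_sym x y : h x y = 0 -> h y x = 0.
Proof. by move=> H; rewrite herm_sym H sigma0 mulr0. Qed.

Lemma Fspan_herm_eq0 (M1 M2 : V -> Prop) x y :
  (forall x y, M1 x -> M2 y -> h x y = 0) -> Fspan M1 x -> M2 y -> h x y = 0.
Proof.
move=> orth [n [c [m [Hm ->]]]] M2y; rewrite herm_suml big1 // => i _.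
by rewrite hermZl orth ?mulr0.
Qed.

End HermitianForm.

(* A Jordan splitting whose components are only asked to be stable under the
   powers of w, not under O_E; this is all the argument uses. *)
Definition weak_jordan_splitting (F : fieldType) (E : falgType F) (V : lmodType E)
    (OE : E -> Prop) (w : E) (h : V -> V -> E) (P : V -> Prop) (M : nat -> V -> Prop)
    (K : nat) : Prop :=
  [/\ (forall k, (k <= K)%N -> M k 0),
      (forall k m n, (k <= K)%N -> M k m -> M k (w ^+ n *: m)),
      (forall x, P x <-> dsum M K x),
      (forall k l x y, (k <= K)%N -> (l <= K)%N -> k != l -> M k x -> M l y -> h x y = 0)
    & (forall k, (k <= K)%N -> forall u,
         dual_lattice OE h (M k) u <-> exists m, M k m /\ u = (w ^+ k)^-1 *: m)].

Section WeakJordanSplitting.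
Variables (F : fieldType) (E : falgType F) (V : lmodType E).
Variables (OE : E -> Prop) (w : E) (h : V -> V -> E) (sigma : E -> E) (eps : F).
Variables (P : V -> Prop) (M : nat -> V -> Prop) (K : nat).
Hypothesis OE0 : OE 0.
Hypothesis OED : forall x y, OE x -> OE y -> OE (x + y).
Hypothesis w_unit : w \is a GRing.unit.
Hypothesis h_herm : sigma_eps_hermitian sigma eps h.
Hypothesis sigmaD : forall x y, sigma (x + y) = sigma x + sigma y.
Hypothesis h_nondeg : nondegenerate_form h.
Hypothesis P_span : forall x, Fspan P x.
Hypothesis M_split : weak_jordan_splitting OE w h P M K.

Let M0 k : (k <= K)%N -> M k 0. Proof. by case: M_split => H _ _ _ _; apply: H. Qed.

Let MwX k m n : (k <= K)%N -> M k m -> M k (w ^+ n *: m).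
Proof. by case: M_split => _ H _ _ _; apply: H. Qed.

Let P_dsum x : P x <-> dsum M K x. Proof. by case: M_split => _ _ H _ _; apply: H. Qed.

Let M_orth k l x y : (k <= K)%N -> (l <= K)%N -> k != l -> M k x -> M l y -> h x y = 0.
Proof. by case: M_split => _ _ _ H _; apply: H. Qed.

Let M_dual k u : (k <= K)%N ->
  dual_lattice OE h (M k) u <-> exists m, M k m /\ u = (w ^+ k)^-1 *: m.
Proof. by case: M_split => _ _ _ _ H /H. Qed.

Lemma component_sub k m : (k <= K)%N -> M k m -> P m.
Proof.
move=> kK Mm; apply/P_dsum; exists (fun l => if l == k then m else 0); split.
  by move=> l lK; case: eqP => [->|_] //; apply: M0.
rewrite (bigD1 (Ordinal (kK : k < K.+1)%N)) //= eqxx big1 ?addr0 // => l /eqP Hl.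
by case: eqP => // lk; case: Hl; apply: val_inj.
Qed.

Lemma Fspan_component_orth k l x y : (k <= K)%N -> (l <= K)%N -> k != l ->
  Fspan (M k) x -> M l y -> h x y = 0.
Proof. by move=> kK lK kl; apply: (Fspan_herm_eq0 h_herm) => a b; apply: M_orth. Qed.

Lemma Fspan_component_winv k b : (0 < k)%N -> (k <= K)%N -> M k b ->
  Fspan (M k) (w^-1 *: b).
Proof.
move=> k0 kK Mb.
have [Fb _] : dual_lattice OE h (M k) ((w ^+ k)^-1 *: b) by apply/M_dual => //; exists b.
have -> : w^-1 *: b = w ^+ k.-1 *: ((w ^+ k)^-1 *: b).
  by rewrite scalerA -{2}(prednK k0) exprS invrM ?unitrX // mulrA mulrV ?unitrX ?mul1r.
by apply: FspanZ Fb => m Mm; apply/Fspan_id/MwX.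
Qed.

Lemma herm_component_sum (t : nat -> V) i m :
  (forall k, (k <= K)%N -> Fspan (M k) (t k)) -> (i <= K)%N -> M i m ->
  h (\sum_(k < K.+1) t k) m = h (t i) m.
Proof.
move=> Ht iK Mm; rewrite (herm_suml h_herm) (bigD1 (Ordinal (iK : i < K.+1)%N)) //=.
rewrite big1 ?addr0 // => k /eqP ki; have kK : (k <= K)%N by rewrite -ltnS.
apply: (Fspan_component_orth kK iK) => //; last exact: Ht.
by apply/eqP => ki'; apply: ki; apply: val_inj.
Qed.

Lemma herm_eq0_of_components d :
  (forall l m, (l <= K)%N -> M l m -> h d m = 0) -> d = 0.
Proof.
move=> Hd; apply: h_nondeg => x; apply: (herm_eq0_sym h_herm sigmaD).
have [n [c [m [Pm ->]]]] := P_span x; rewrite (herm_suml h_herm) big1 // => l _.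
rewrite (hermZl h_herm); case/P_dsum: (Pm l) => y [Hy ->].
rewrite (herm_suml h_herm) big1 ?mulr0 // => k _; have kK : (k <= K)%N by rewrite -ltnS.
by apply: (herm_eq0_sym h_herm sigmaD); apply: (Hd k) => //; apply: Hy.
Qed.

Lemma decomposition_unique (a b : nat -> V) :
  (forall k, (k <= K)%N -> Fspan (M k) (a k)) ->
  (forall k, (k <= K)%N -> Fspan (M k) (b k)) ->
  \sum_(k < K.+1) a k = \sum_(k < K.+1) b k ->
  forall i, (i <= K)%N -> a i = b i.
Proof.
move=> Ha Hb ab i iK; apply/eqP; rewrite -subr_eq0; apply/eqP.
apply: herm_eq0_of_components => l m lK Mm; rewrite (hermBl h_herm).
have [<-|li] := eqVneq l i.
  by rewrite -(herm_component_sum Ha lK Mm) -(herm_component_sum Hb lK Mm) ab subrr.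
have il : i != l by rewrite eq_sym.
rewrite (Fspan_component_orth iK lK il (Ha i iK) Mm).
by rewrite (Fspan_component_orth iK lK il (Hb i iK) Mm) subrr.
Qed.

Lemma Fspan_decomposition x : Fspan P x -> exists t : nat -> V,
  (forall k, (k <= K)%N -> Fspan (M k) (t k)) /\ x = \sum_(k < K.+1) t k.
Proof.
move=> [n [c [m [Pm ->]]]].
have /fin_all_exists [y Hy] : forall l : 'I_n, exists y : nat -> V,
    (forall k, (k <= K)%N -> M k (y k)) /\ m l = \sum_(k < K.+1) y k.
  by move=> l; apply/P_dsum.
exists (fun k => \sum_(l < n) (c l)%:A *: y l k); split.
  by move=> k kK; exists n, c, (fun l => y l k); split => // l; case: (Hy l) => + _; apply.
rewrite exchange_big /=; apply: eq_bigr => l _.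
by case: (Hy l) => _ ->; rewrite scaler_sumr.
Qed.

Lemma dual_herm_integral j u m : (j <= K)%N ->
  dual_lattice OE h (M j) u -> P m -> OE (h u m).
Proof.
move=> jK [Fu Ou] /P_dsum [y [Hy ->]]; rewrite (herm_sumr h_herm sigmaD).
elim/big_ind: _ => // k _; have kK : (k <= K)%N by rewrite -ltnS.
have [kj|kj] := eqVneq (k : nat) j; first by apply: Ou; rewrite -kj; apply: Hy.
have jk : j != k by rewrite eq_sym.
by rewrite (Fspan_component_orth jK kK jk Fu (Hy k kK)).
Qed.

Lemma dual_of_integral_sum (t : nat -> V) :
  (forall k, (k <= K)%N -> Fspan (M k) (t k)) ->
  (forall m, P m -> OE (h (\sum_(k < K.+1) t k) m)) ->
  forall i, (i <= K)%N -> dual_lattice OE h (M i) (t i).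
Proof.
move=> Ht Oz i iK; split=> [|m Mm]; first exact: Ht.
by rewrite -(herm_component_sum Ht iK Mm); apply/Oz/(component_sub iK).
Qed.

Theorem weak_jordan_component i j : (i <= j)%N -> (j <= K)%N ->
  forall g, is_isometry h g -> stabilises g P ->
  forall x, M j x ->
  forall y : nat -> V, (forall k, (k <= K)%N -> Fspan (M k) (y k)) ->
  g x = \sum_(k < K.+1) y k ->
  exists m, M i m /\ y i = w ^+ (j - i) *: m.
Proof.
move=> ij jK g [_ gZ _ g_iso] gP x Mx y Hy gx; have iK := leq_trans ij jK.
have wjU : w ^+ j \is a GRing.unit by rewrite unitrX.
pose u := (w ^+ j)^-1 *: x.
have Du : dual_lattice OE h (M j) u by apply/M_dual => //; exists x.
have [t [Ht gu]] := Fspan_decomposition (P_span (g u)).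
have yE : y i = w ^+ j *: t i.
  apply: (decomposition_unique (b := fun k => w ^+ j *: t k)) => // [k kK|].
    by apply: FspanZ (Ht k kK) => m Mm; apply/Fspan_id/MwX.
  by rewrite -gx -scaler_sumr -gu -gZ /u scalerA mulrV // scale1r.
have Dti : dual_lattice OE h (M i) (t i).
  apply: (dual_of_integral_sum Ht) => // m /gP [m' [Pm' ->]].
  by rewrite -gu g_iso; apply: dual_herm_integral Du Pm'.
have [m [Mm tiE]] := (M_dual _ iK).1 Dti.
exists m; split => //; rewrite yE tiE scalerA.
by rewrite -{1}(subnK ij) exprD mulrK ?unitrX.
Qed.

End WeakJordanSplitting.

Section JordanSplitting.
Variables (F : fieldType) (E : falgType F) (V : lmodType E).
Variables (OE : E -> Prop) (w : E) (h : V -> V -> E).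
Hypothesis OE1 : OE 1.
Hypothesis OEM : forall x y, OE x -> OE y -> OE (x * y).
Hypothesis OEw : OE w.

Lemma OE_submodule_sum (M : V -> Prop) n (a : 'I_n -> E) (m : 'I_n -> V) :
  OE_submodule OE M -> (forall l, OE (a l)) -> (forall l, M (m l)) ->
  M (\sum_(l < n) a l *: m l).
Proof. by move=> [M0 MD MZ] Ha Hm; elim/big_rec: _ => // l x _ Hx; apply/MD/Hx/MZ. Qed.

Lemma ideal_mul_pE_pow (M : V -> Prop) k m :
  M m -> ideal_mul (pE_pow OE w k%:Z) M (w ^+ k *: m).
Proof.
move=> Mm; exists 1%N, (fun _ => w ^+ k), (fun _ => m).
by split => [_||]; rewrite ?big_ord1 //; exists 1; rewrite mulr1.
Qed.

Lemma ideal_mul_pE_powN (M : V -> Prop) k u : OE_submodule OE M ->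
  ideal_mul (pE_pow OE w (- k%:Z)) M u <-> exists m, M m /\ u = (w ^+ k)^-1 *: m.
Proof.
move=> HM; split.
  move=> [n [a [m [Ha Hm ->]]]]; have [b Hb] := fin_all_exists Ha.
  exists (\sum_(l < n) b l *: m l); split.
    by apply: OE_submodule_sum => // l; case: (Hb l).
  rewrite scaler_sumr; apply: eq_bigr => l _.
  by case: (Hb l) => _ ->; rewrite scalerA exprnN.
move=> [m [Mm ->]]; exists 1%N, (fun _ => (w ^+ k)^-1), (fun _ => m).
by split => [_||]; rewrite ?big_ord1 //; exists 1; rewrite mulr1 exprnN.
Qed.

Lemma jordan_splitting_weak (L : V -> Prop) (Ls : nat -> V -> Prop) N :
  jordan_splitting OE w h L Ls N -> weak_jordan_splitting OE w h L Ls N.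
Proof.
move=> [Ls_sub L_dsum _ Ls_orth Ls_dual]; split => //.
- by move=> k /Ls_sub [].
- move=> k m n /Ls_sub [_ _ LsZ] Lm; apply: LsZ Lm.
  by elim: n => [|n IH]; rewrite ?expr0 // exprS; apply: OEM.
- by move=> k kK u; rewrite Ls_dual // ideal_mul_pE_powN //; apply: Ls_sub.
Qed.

End JordanSplitting.

Section LatticeLprime.
Variables (F : fieldType) (E : falgType F) (V : lmodType E).
Variables (OE : E -> Prop) (w rho : E) (h : V -> V -> E) (sigma : E -> E) (eps : F).
Variables (L : V -> Prop) (Ls : nat -> V -> Prop) (n : nat).
Hypothesis OE1 : OE 1.
Hypothesis OED : forall x y, OE x -> OE y -> OE (x + y).
Hypothesis OEM : forall x y, OE x -> OE y -> OE (x * y).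
Hypothesis w_twisted : sigma_twisted OE sigma w rho.
Hypothesis h_herm : sigma_eps_hermitian sigma eps h.
Hypothesis sigmaD : forall x y, sigma (x + y) = sigma x + sigma y.
Hypothesis L_split : jordan_splitting OE w h L Ls n.+2.

Let OEw : OE w. Proof. by case: w_twisted. Qed.
Let w_unit : w \is a GRing.unit. Proof. by case: w_twisted. Qed.
Let L_weak := jordan_splitting_weak OE1 OEM OEw L_split.

Let Ls_sub k : (k <= n.+2)%N -> OE_submodule OE (Ls k).
Proof. by case: L_split => H _ _ _ _; apply: H. Qed.

Let Ls0 k : (k <= n.+2)%N -> Ls k 0. Proof. by case/Ls_sub. Qed.

Let LsW k m e : (k <= n.+2)%N -> Ls k m -> Ls k (w ^+ e *: m).
Proof. by case: L_weak => _ H _ _ _; apply: H. Qed.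

Let Ls_orth k l x y : (k <= n.+2)%N -> (l <= n.+2)%N -> k != l -> Ls k x -> Ls l y -> h x y = 0.
Proof. by case: L_weak => _ _ _ H _; apply: H. Qed.

Let Ls_dual k u : (k <= n.+2)%N ->
  dual_lattice OE h (Ls k) u <-> exists m, Ls k m /\ u = (w ^+ k)^-1 *: m.
Proof. by case: L_weak => _ _ _ _ H /H. Qed.

Let n_le : (n <= n.+2)%N. Proof. by rewrite leqW ?leqnSn. Qed.

Let orth_n_top x y : Ls n x -> Ls n.+2 y -> h x y = 0.
Proof. by apply: Ls_orth => //; rewrite ltn_eqF // ltnW. Qed.

Let orth_top_n x y : Ls n.+2 x -> Ls n y -> h x y = 0.
Proof. by apply: Ls_orth => //; rewrite gtn_eqF // ltnW. Qed.

Let Lps := Lprime_parts OE w Ls n.+2.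

Lemma Lprime_parts_neq k : k != n -> Lps k = Ls k.
Proof. by move=> kn; rewrite /Lps /Lprime_parts !subSS subn0 (negbTE kn). Qed.

Lemma Lprime_parts_mid x : Lps n x <-> exists a b, [/\ Ls n a, Ls n.+2 b & x = a + w^-1 *: b].
Proof.
rewrite /Lps /Lprime_parts !subSS subn0 eqxx; split.
  move=> [a [b' [La /(ideal_mul_pE_powN w OE1 1 _ (Ls_sub (leqnn _))) [b [Lb ->]] ->]]] //.
  by exists a, b; rewrite expr1.
move=> [a [b [La Lb ->]]]; exists a, (w^-1 *: b); split => //.
by apply/(ideal_mul_pE_powN w OE1 1 _ (Ls_sub (leqnn _))) => //; exists b; rewrite expr1.
Qed.

Let Ls_mid a : Ls n a -> Lps n a.
Proof.
by move=> La; apply/Lprime_parts_mid; exists a, 0; split; rewrite ?scaler0 ?addr0 //; exact: Ls0.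
Qed.

Let Ls_top_mid b : Ls n.+2 b -> Lps n (w^-1 *: b).
Proof. by move=> Lb; apply/Lprime_parts_mid; exists 0, b; split; rewrite ?add0r //; exact: Ls0. Qed.

Lemma Lprime_parts0 k : (k <= n.+1)%N -> Lps k 0.
Proof.
move=> kK; have [->|kn] := eqVneq k n; first exact/Ls_mid/Ls0.
by rewrite Lprime_parts_neq //; apply/Ls0/leqW.
Qed.

Lemma Lprime_partsW k m e : (k <= n.+1)%N -> Lps k m -> Lps k (w ^+ e *: m).
Proof.
move=> kK; have [->|kn] := eqVneq k n; last first.
  by rewrite Lprime_parts_neq //; apply/LsW/leqW.
move=> /Lprime_parts_mid [a [b [La Lb ->]]]; apply/Lprime_parts_mid.
exists (w ^+ e *: a), (w ^+ e *: b); split; [exact: LsW | exact: LsW |].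
rewrite scalerDr !scalerA; congr (_ + _ *: _).
exact: commrV (commr_sym (commrX e (commr_refl w))).
Qed.

Lemma Lprime_parts_orth k l x y : (k <= n.+1)%N -> (l <= n.+1)%N -> k != l ->
  Lps k x -> Lps l y -> h x y = 0.
Proof.
have mid_orth l' x' y' : (l' <= n.+1)%N -> n != l' -> Lps n x' -> Ls l' y' -> h x' y' = 0.
  move=> lK nl /Lprime_parts_mid [a [b [La Lb ->]]] Ly.
  have top_l : n.+2 != l' by rewrite gtn_eqF.
  have lK2 : (l' <= n.+2)%N by apply: leqW.
  rewrite (hermDl h_herm) (hermZl h_herm) (Ls_orth n_le lK2 nl La Ly).
  by rewrite (Ls_orth (leqnn _) lK2 top_l Lb Ly) mulr0 addr0.
move=> kK lK kl; have [kn|kn] := eqVneq k n; have [ln|ln] := eqVneq l n.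
- by move: kl; rewrite kn ln eqxx.
- by rewrite kn (Lprime_parts_neq ln) => Lx Ly; apply: (mid_orth l); rewrite // -kn.
- rewrite ln (Lprime_parts_neq kn) => Lx Ly; apply: (herm_eq0_sym h_herm sigmaD).
  by apply: (mid_orth k); rewrite // -ln eq_sym.
- by rewrite (Lprime_parts_neq kn) (Lprime_parts_neq ln); apply: Ls_orth; rewrite // leqW.
Qed.

Lemma L_sub_Lprime x : L x -> dsum Lps n.+1 x.
Proof.
case: L_split => _ L_dsum _ _ _ /L_dsum [y [Ly ->]].
exists (fun k => y k + (if k == n then y n.+2 else 0)); split.
  move=> k kK; have [->|kn] := eqVneq k n.
    apply/Lprime_parts_mid; exists (y n), (w *: y n.+2); split.
    - exact/Ly/leqW/leqW.
    - by rewrite -[w]expr1; apply/LsW/Ly.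
    - by rewrite scalerA mulVr // scale1r.
  by rewrite Lprime_parts_neq // addr0; apply/Ly/leqW.
rewrite big_split /= big_ord_recr /=; congr (_ + _).
rewrite (bigD1 (Ordinal (leqW (leqnn n.+1) : n < n.+2)%N)) //= eqxx big1 ?addr0 // => i /eqP ni.
by rewrite ifN //; apply/eqP => in_; apply: ni; apply: val_inj.
Qed.

Lemma hermZr_winv x y : h x (w^-1 *: y) = h x y * rho.
Proof.
case: w_twisted => _ _ sigma_wV _.
by rewrite (herm_sym h_herm) (hermZl h_herm) sigma_wV mulrA -(herm_sym h_herm).
Qed.

Let Fspan_top_winv b : Fspan (Ls n.+2) b -> Fspan (Ls n.+2) (w^-1 *: b).
Proof. by apply: FspanZ => b' Lb'; apply: (Fspan_component_winv w_unit L_weak). Qed.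

Lemma Fspan_Lprime_mid u : Fspan (Lps n) u ->
  exists u1 u2, [/\ Fspan (Ls n) u1, Fspan (Ls n.+2) u2 & u = u1 + w^-1 *: u2].
Proof.
move=> [k [c [m [Lm ->]]]].
have /fin_all_exists [a Ha] := fun l => (Lprime_parts_mid (m l)).1 (Lm l).
have /fin_all_exists [b Hb] := Ha.
exists (\sum_(l < k) (c l)%:A *: a l), (\sum_(l < k) (c l)%:A *: b l); split.
- by exists k, c, a; split => // l; case: (Hb l).
- by exists k, c, b; split => // l; case: (Hb l).
rewrite scaler_sumr -big_split; apply: eq_bigr => l _.
case: (Hb l) => _ _ ->; rewrite scalerDr; congr (_ + _).
by rewrite !scalerA mulr_algl mulr_algr.
Qed.

Let winv_shift : (w ^+ n)^-1 * w^-1 = w * (w ^+ n.+2)^-1.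
Proof.
rewrite -invrM ?unitrX // -exprS [w ^+ n.+2]exprSr invrM ?unitrX //.
by rewrite mulrA mulrV // mul1r.
Qed.

Lemma dual_Lprime_mid u :
  dual_lattice OE h (Lps n) u -> exists m, Lps n m /\ u = (w ^+ n)^-1 *: m.
Proof.
move=> [/Fspan_Lprime_mid [u1 [u2 [Fu1 Fu2 ->]]] Ou].
have Du1 : dual_lattice OE h (Ls n) u1.
  split => // a La; have := Ou _ (Ls_mid La).
  by rewrite (hermDl h_herm) (hermZl h_herm) (Fspan_herm_eq0 h_herm orth_top_n Fu2 La) mulr0 addr0.
have Du2 : dual_lattice OE h (Ls n.+2) (w^-1 *: (w^-1 *: u2)).
  split => [|b Lb]; first exact/Fspan_top_winv/Fspan_top_winv.
  have := Ou _ (Ls_top_mid Lb).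
  rewrite (hermDl h_herm) !hermZr_winv (Fspan_herm_eq0 h_herm orth_n_top Fu1 Lb) mul0r add0r.
  move=> O2; case: w_twisted => _ _ _ twist.
  by rewrite (hermZl h_herm); apply/twist; rewrite mulrA mulrV // mul1r.
have [a [La ->]] := (Ls_dual _ n_le).1 Du1.
have [b [Lb u2E]] := (Ls_dual _ (leqnn _)).1 Du2.
exists (a + w^-1 *: b); split; first by apply/Lprime_parts_mid; exists a, b.
rewrite scalerDr; congr (_ + _).
have -> : w^-1 *: u2 = w *: (w^-1 *: (w^-1 *: u2)) by rewrite (scalerA w) mulrV ?scale1r.
by rewrite u2E !scalerA winv_shift.
Qed.

Let Ls_top_sub b : Ls n.+2 b -> Lps n b.
Proof.
move=> Lb; apply/Lprime_parts_mid; exists 0, (w *: b); split; first exact: Ls0.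
  by rewrite -[w]expr1; apply: LsW.
by rewrite add0r scalerA mulVr ?scale1r.
Qed.

Lemma Lprime_mid_dual m : Lps n m -> dual_lattice OE h (Lps n) ((w ^+ n)^-1 *: m).
Proof.
move=> /Lprime_parts_mid [a [b [La Lb ->]]].
have [Fa Oa] : dual_lattice OE h (Ls n) ((w ^+ n)^-1 *: a) by apply/Ls_dual => //; exists a.
have [Fb Ob] : dual_lattice OE h (Ls n.+2) ((w ^+ n.+2)^-1 *: b) by apply/Ls_dual => //; exists b.
rewrite scalerDr (scalerA _ w^-1) winv_shift -scalerA; split.
  apply: FspanD; first exact: Fspan_sub Ls_mid Fa.
  apply: (Fspan_sub Ls_top_sub); apply: FspanZ Fb => b' Lb'.
  by apply/Fspan_id; rewrite -[w]expr1; apply: LsW.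
move=> _ /Lprime_parts_mid [a' [b' [La' Lb' ->]]].
rewrite !(hermDr h_herm sigmaD) !(hermDl h_herm) !hermZr_winv !(hermZl h_herm w).
rewrite (Fspan_herm_eq0 h_herm orth_n_top Fa Lb') (Fspan_herm_eq0 h_herm orth_top_n Fb La').
rewrite mulr0 mul0r addr0 add0r; apply: OED; first exact: Oa.
by case: w_twisted => _ _ _ ->; apply: Ob.
Qed.

Lemma Lprime_weak_jordan : weak_jordan_splitting OE w h (dsum Lps n.+1) Lps n.+1.
Proof.
split => //; [exact: Lprime_parts0 | exact: Lprime_partsW | exact: Lprime_parts_orth |].
move=> k kK u; have [->|kn] := eqVneq k n.
  by split => [/dual_Lprime_mid|[m [Lm ->]]] //; apply: Lprime_mid_dual.
by rewrite Lprime_parts_neq //; apply/Ls_dual/leqW.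
Qed.

End LatticeLprime.

Theorem lemma3p8
  (F : fieldType) (v : F -> int) (wF : F) (p : nat)
  (E : falgType F) (c : Ecase) (sigma : E -> E) (eps : F)
  (OE : E -> Prop) (wE : E)
  (V : lmodType E) (h : V -> V -> E)
  (L : V -> Prop) (Ls : nat -> V -> Prop) (N : nat) :
  (* F is a non-archimedean local field, with uniformiser wF and residue char p *)
  nonarch_local_field v -> uniformiserF v wF -> residue_char v p ->
  (* (E, sigma) is one of the four admissible pairs, eps = +-1 *)
  admissible c sigma -> (eps = 1 \/ eps = -1) ->
  (* O_E is the maximal O_F-order; varpi_E as in the context *)
  is_maximal_order (OF v) OE ->
  ((c = CaseQuadField /\ ramified OE wF) \/ c = CaseQuaternion -> uniformiserE OE wE) ->
  (~ ((c = CaseQuadField /\ ramified OE wF) \/ c = CaseQuaternion) -> wE = wF%:A) ->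
  (* assumptions on p *)
  ((c = CaseQuadField /\ ramified OE wF) -> p <> 2%N) ->
  ((c = CaseF /\ eps = 1) -> p <> 2%N) ->
  (* L is a finite-rank O_E-lattice with a (sigma,eps)-Hermitian form,
     integral on L and nondegenerate_form on V = L (x) F *)
  full_lattice OE L -> sigma_eps_hermitian sigma eps h ->
  (forall x y, L x -> L y -> OE (h x y)) -> nondegenerate_form h ->
  (* a Jordan splitting with N >= 2 *)
  jordan_splitting OE wE h L Ls N -> (2 <= N)%N ->
  let Lps := Lprime_parts OE wE Ls N in
  let Lp := dsum Lps N.-1 in
  (* M = L, with decomposition Ls, indices 0 <= i <= j <= N *)
  (forall i j, (i <= j)%N -> (j <= N)%N ->
     forall g, is_isometry h g -> stabilises g L ->
     forall x, Ls j x ->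
     forall y : nat -> V, (forall k, (k <= N)%N -> Fspan (Ls k) (y k)) ->
       g x = \sum_(k < N.+1) y k ->
       ideal_mul (pE_pow OE wE (Posz (j - i)%N)) (Ls i) (y i)) /\
  (* M = L', with decomposition Lps, indices 0 <= i <= j <= N-1 *)
  (forall i j, (i <= j)%N -> (j <= N.-1)%N ->
     forall g, is_isometry h g -> stabilises g Lp ->
     forall x, Lps j x ->
     forall y : nat -> V, (forall k, (k <= N.-1)%N -> Fspan (Lps k) (y k)) ->
       g x = \sum_(k < N.-1.+1) y k ->
       ideal_mul (pE_pow OE wE (Posz (j - i)%N)) (Lps i) (y i)).
Proof.
move=> [[vM vD _] _ _] wF_unif _ E_adm _ [OE_order _] unif_ram unif_unram _ _.
move=> [_ _ L_span] h_herm _ h_nondeg L_split N2 Lps Lp.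
have [sigmaD sigmaZ] := admissible_sigma_linear E_adm.
have [rho wE_twisted] : exists rho, sigma_twisted OE sigma wE rho.
  have [ram|unram] := classic ((c = CaseQuadField /\ ramified OE wF) \/ c = CaseQuaternion).
    have [E_div sigmaM sigma1 sigmaK trace] := ramified_admissible ram E_adm.
    by exists (sigma wE^-1); apply: (uniformiser_sigma_twisted vM vD OE_order sigmaD sigmaZ
      sigmaM sigma1 sigmaK trace wF_unif E_div (unif_ram ram)).
  have [wF0 vwF] := wF_unif; rewrite (unif_unram unram); exists wF^-1%:A.
  by apply: (scalar_sigma_twisted OE_order sigmaZ wF0); right; rewrite vwF.
have [OEw wE_unit _ _] := wE_twisted.
have OE1 := OE1 OE_order; have OEM := OEM OE_order.
have OE0 := OE0 OE_order; have OED := OED OE_order.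
have component_bound := weak_jordan_component OE0 OED wE_unit h_herm sigmaD h_nondeg.
split=> i j ij jN g g_iso g_stab x Mx y Hy gx.
  have L_weak := jordan_splitting_weak OE1 OEM OEw L_split.
  have [m [Lm ->]] := component_bound _ _ _ L_span L_weak _ _ ij jN _ g_iso g_stab _ Mx _ Hy gx.
  exact: ideal_mul_pE_pow.
case: N L_split N2 @Lps @Lp jN g_stab Mx Hy gx => [|[|n]] // L_split _ Lps Lp jN g_stab Mx Hy gx.
have Lp_span x' : Fspan Lp x' := Fspan_sub (L_sub_Lprime OE1 OEM wE_twisted L_split) (L_span x').
have Lp_weak := Lprime_weak_jordan OE1 OED OEM wE_twisted h_herm sigmaD L_split.
have [m [Lm ->]] := component_bound _ _ _ Lp_span Lp_weak _ _ ij jN _ g_iso g_stab _ Mx _ Hy gx.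
exact: ideal_mul_pE_pow.
Qed.
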